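(* Let $p$ be an integer with $p\leq-1$ or $p\geq2$, and let $r\geq1$ be an integer. For $p\leq -1$ define \[ b^{-}_{K_p,r}=-\frac{1}{r^2}\sum_{d\mid r}\mu\!\left(\tfrac{r}{d}\right)\binom{3d-1}{d-1},\qquad b^{+}_{K_p,r}=\frac{1}{r^2}\sum_{d\mid r}\mu\!\left(\tfrac{r}{d}\right)\binom{(2|p|+1)d-1}{d-1}, \] and for $p\geq2$ define \[ b^{-}_{K_p,r}=-\frac{1}{r^2}\sum_{d\mid r}\mu\!\left(\tfrac{r}{d}\right)(-1)^{d+1}\binom{2d-1}{d-1},\qquad b^{+}_{K_p,r}=\frac{1}{r^2}\sum_{d\mid r}\mu\!\left(\tfrac{r}{d}\right)(-1)^{d}\binom{(2p+2)d-1}{d-1}. \] Then $b^{-}_{K_p,r}$ and $b^{+}_{K_p,r}$ are integers.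
   Context: $\mu$ is the Möbius function and the sums run over positive divisors $d$ of $r$. (These are the extremal BPS invariants of the twist knots $K_p$ found by Garoufalidis–Kucharski–Sułkowski.) *)

From mathcomp Require Import all_boot all_order all_algebra.
Set Implicit Arguments. Unset Strict Implicit. Unset Printing Implicit Defensive.
Import Order.TTheory GRing.Theory Num.Theory.
Local Open Scope ring_scope.

Definition moebius (n : nat) : int :=
  if (0 < n)%N && all (fun p => logn p n == 1%N) (primes n)
  then (-1) ^+ size (primes n) else 0.

(* Extremal BPS invariants of twist knots K_p, valued in rat.
   Case p <= -1 and case p >= 2 follow the paper; for p in {0,1} the
   value is irrelevant (set by the p >= 2 formula, never used). *)
Definition b_minus (p : int) (r : nat) : rat :=
  if p <= -1 then
    - (r%:R ^+ 2)^-1 * \sum_(d <- divisors r)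
        ((moebius (r %/ d))%:~R * ('C(3 * d - 1, d - 1))%:R)
  else
    - (r%:R ^+ 2)^-1 * \sum_(d <- divisors r)
        ((moebius (r %/ d))%:~R * (-1) ^+ d.+1 * ('C(2 * d - 1, d - 1))%:R).

Definition b_plus (p : int) (r : nat) : rat :=
  if p <= -1 then
    (r%:R ^+ 2)^-1 * \sum_(d <- divisors r)
        ((moebius (r %/ d))%:~R * ('C((2 * `|p| + 1) * d - 1, d - 1))%:R)
  else
    (r%:R ^+ 2)^-1 * \sum_(d <- divisors r)
        ((moebius (r %/ d))%:~R * (-1) ^+ d * ('C((2 * `|p| + 2) * d - 1, d - 1))%:R).

From mathcomp Require Import all_boot all_order all_algebra.
From mathcomp Require Import zify ring.
Import GRing.Theory Num.Theory.

(* Both invariants are (1/r^2) sum_(d | r) mu(r/d) f(d), up to sign, for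
   f(d) = (-1)^((A+1)d) C(Ad-1, d-1) with A = 3, 2|p|+1, 2 or 2|p|+2. Handling one prime
   p | r at a time, the Moebius sum pairs d with dp, so it suffices that
   f(m p^k) = f(m p^(k-1)) mod p^(2k). Put n = m p^(k-1), y = np, let P be the product of
   the i < y prime to p and Q(x) = prod_(i < y prime to p) (xy - i). Removing the
   multiples of p from C(Ay-1, y-1) (y-1)! = prod_(i < y) (Ay - i) gives
   C(Ay-1, y-1) P = C(An-1, n-1) Q(A). Modulo y^2, Q is affine in x; it equals e P at
   x = 0, with e = (-1)^(y-n), and P at x = 1 by the symmetry i <-> y - i. As P is prime
   to p this yields the congruence up to a factor that is 1 unless e = -1, which forces
   p = 2 and k = 1, where the sign of f absorbs it mod 4. *)

Lemma filter_dvdn_index_iota p n : 0 < p ->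
  [seq i <- index_iota 1 (n * p) | p %| i] = [seq p * j | j <- index_iota 1 n].
Proof.
move=> p_gt0; apply: (irr_sorted_eq ltn_trans ltnn).
- exact/sorted_filter/iota_ltn_sorted/ltn_trans.
- by apply: homo_sorted (iota_ltn_sorted _ _) => i j; rewrite ltn_pmul2l.
move=> i; rewrite mem_filter mem_index_iota.
apply/andP/mapP => [[/dvdnP[j ->] ij] | [j]].
  by exists j; rewrite 1?mulnC // mem_index_iota; nia.
by rewrite mem_index_iota => j_lt ->; split; [exact: dvdn_mulr | nia].
Qed.

Lemma big_nat_dvdn (R : Type) (idx : R) (op : R -> R -> R) (F : nat -> R) p n :
  0 < p ->
  \big[op/idx]_(1 <= i < n * p | p %| i) F i = \big[op/idx]_(1 <= j < n) F (p * j).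
Proof. by move=> p_gt0; rewrite -big_filter filter_dvdn_index_iota // big_map. Qed.

Lemma count_coprime_index_iota p n : 0 < p ->
  count (fun i => ~~ (p %| i)) (index_iota 1 (n * p)) = n * p - n.
Proof.
move=> p_gt0; have := count_predC (dvdn p) (index_iota 1 (n * p)).
rewrite -size_filter filter_dvdn_index_iota // size_map !size_iota.
rewrite (@eq_count _ _ (predC (dvdn p))) //; nia.
Qed.

Lemma big_nat_coprime_rev (R : Type) (idx : R) (op : SemiGroup.com_law R)
    (F : nat -> R) p y :
  p %| y ->
  \big[op/idx]_(1 <= i < y | ~~ (p %| i)) F (y - i)
  = \big[op/idx]_(1 <= i < y | ~~ (p %| i)) F i.
Proof.
move=> p_y; rewrite big_nat_rev big_nat_cond [RHS]big_nat_cond add1n.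
apply: eq_big => [i | i /andP[/andP[_ i_lt] _]]; rewrite subSS.
  by case/boolP: (1 <= i < y) => //= /andP[_ i_lt]; rewrite dvdn_subr // ltnW.
by rewrite subKn // ltnW.
Qed.

Lemma coprime_prod_ndvd p y : prime p -> coprime p (\prod_(1 <= i < y | ~~ (p %| i)) i).
Proof.
move=> p_pr; apply: (big_ind (coprime p)) => [|a b|i]; first exact: coprimen1.
  by rewrite coprimeMr => -> ->.
by rewrite prime_coprime.
Qed.

Lemma odd_mulnBn_prime p n : prime p -> odd (n * p - n) = odd n && (p == 2).
Proof.
move=> p_pr; rewrite -{2}(muln1 n) -mulnBr oddM oddB ?prime_gt0 //=.
case: (even_prime p_pr) => [-> // | p_odd].
have /negPf -> : p != 2 by apply: contraTneq p_odd => ->.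
by rewrite p_odd andbF.
Qed.

Lemma bin_mul_prod N M : 0 < M ->
  'C(N - 1, M - 1) * \prod_(1 <= i < M) i = \prod_(1 <= i < M) (N - i).
Proof.
case: M => // M _; rewrite !subn1 /= -fact_prod bin_ffact ffact_prod big_add1 big_mkord.
by apply: eq_bigr => i _; rewrite -subn1 -subnDA add1n.
Qed.

Lemma bin_mul_coprime_prod A p n : 0 < p -> 0 < n ->
  'C(A * (n * p) - 1, n * p - 1) * \prod_(1 <= i < n * p | ~~ (p %| i)) i
  = 'C(A * n - 1, n - 1) * \prod_(1 <= i < n * p | ~~ (p %| i)) (A * (n * p) - i).
Proof.
move=> p_gt0 n_gt0; have y_gt0 : 0 < n * p by rewrite muln_gt0 n_gt0.
have := @bin_mul_prod (A * (n * p)) _ y_gt0.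
rewrite (bigID (dvdn p)) [X in _ = X](bigID (dvdn p)) /= !big_nat_dvdn //.
have -> : \prod_(1 <= j < n) (A * (n * p) - p * j)
    = \prod_(1 <= j < n) p * \prod_(1 <= j < n) (A * n - j).
  by rewrite -big_split; apply: eq_bigr => j _; rewrite /= mulnBr; congr (_ - _); ring.
rewrite big_split /= -bin_mul_prod //.
set X := \prod_(1 <= j < n) p; set Y := \prod_(1 <= j < n) j.
have XY_gt0 : 0 < X * Y.
  by rewrite muln_gt0 prodn_gt0 // /Y -(prednK n_gt0) -fact_prod fact_gt0.
move=> E; apply/eqP; rewrite -(eqn_pmul2l XY_gt0); apply/eqP.
by rewrite mulnCA E; ring.
Qed.

Local Open Scope ring_scope.

Lemma dvdz_prod_affine (I : Type) (s : seq I) (P : pred I) (F : I -> int) (x y : int) :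
  (y ^+ 2 %| \prod_(i <- s | P i) (x * y - F i)
     - (\prod_(i <- s | P i) (- F i)
        + x * (\prod_(i <- s | P i) (y - F i) - \prod_(i <- s | P i) (- F i))))%Z.
Proof.
have [a [b ab]] : exists a b : int, forall z : int,
    (y ^+ 2 %| \prod_(i <- s | P i) (z * y - F i) - (a + b * z * y))%Z.
  elim: s => [|j s [a [b IH]]].
    by exists 1, 0 => z; rewrite big_nil !mul0r addr0 subrr dvdz0.
  have [Pj | nPj] := boolP (P j); last first.
    by exists a, b => z; rewrite big_cons (negbTE nPj).
  exists (- a * F j), (a - b * F j) => z; rewrite big_cons Pj.
  set Q := \prod_(i <- s | P i) _.
  have -> : (z * y - F j) * Q - (- a * F j + (a - b * F j) * z * y)
      = (z * y - F j) * (Q - (a + b * z * y)) + b * z ^+ 2 * y ^+ 2 by ring.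
  by apply: rpredD; [exact: dvdz_mull (IH z) | exact: dvdz_mull (dvdzz _)].
have ab0 : (y ^+ 2 %| \prod_(i <- s | P i) (- F i) - a)%Z.
  by move: (ab 0); under eq_bigr do rewrite mul0r sub0r; rewrite mulr0 mul0r addr0.
have ab1 : (y ^+ 2 %| \prod_(i <- s | P i) (y - F i) - (a + b * y))%Z.
  by move: (ab 1); under eq_bigr do rewrite mul1r; rewrite mulr1.
move: (ab x) ab0 ab1; set Qx := \prod_(i <- s | P i) _; set Q0 := \prod_(i <- s | P i) _.
set Q1 := \prod_(i <- s | P i) _ => Dx D0 D1.
have -> : Qx - (Q0 + x * (Q1 - Q0))
    = (Qx - (a + b * x * y)) - (Q0 - a) - x * ((Q1 - (a + b * y)) - (Q0 - a)) by ring.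
by apply: rpredB; [exact: rpredB | exact/dvdz_mull/rpredB].
Qed.

Lemma prodrN_count (R : comPzRingType) (I : Type) (r : seq I) (P : pred I) (F : I -> R) :
  \prod_(i <- r | P i) - F i = (-1) ^+ count P r * \prod_(i <- r | P i) F i.
Proof.
by rewrite -iter_mulr_1 -big_const_seq -big_split; apply: eq_bigr => i _; rewrite /= mulN1r.
Qed.

Lemma Posz_prod (I : Type) (r : seq I) (P : pred I) (F : I -> nat) :
  (\prod_(i <- r | P i) F i)%N%:Z = \prod_(i <- r | P i) (F i)%:Z.
Proof. exact: (big_morph Posz PoszM). Qed.

Definition signed_binom (A d : nat) : int := (-1) ^+ (A.+1 * d) * 'C(A * d - 1, d - 1)%:Z.

Section CoprimeProduct.

Variables (A p n : nat).
Hypotheses (A_gt0 : (0 < A)%N) (p_gt0 : (0 < p)%N) (n_gt0 : (0 < n)%N).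

Local Notation y := (n * p)%N.
Local Notation e := ((-1) ^+ (y - n) : int).

Lemma prod_coprime_shift_cong :
  (y%:Z ^+ 2 %| (\prod_(1 <= i < y | ~~ (p %| i)%N) (A * y - i))%N%:Z
               - (e + A%:Z * (1 - e)) * (\prod_(1 <= i < y | ~~ (p %| i)%N) i)%N%:Z)%Z.
Proof.
have := @dvdz_prod_affine _ (index_iota 1 y) (fun i => ~~ (p %| i)%N) Posz A%:Z y%:Z.
have shiftA : \prod_(1 <= i < y | ~~ (p %| i)%N) (A%:Z * y%:Z - i%:Z)
    = \prod_(1 <= i < y | ~~ (p %| i)%N) (A * y - i)%N%:Z.
  rewrite big_nat_cond [RHS]big_nat_cond; apply: eq_bigr => i /andP[/andP[_ i_lt] _].
  by rewrite subzn ?PoszM // (leq_trans (ltnW i_lt)) // leq_pmull.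
have shift1 : \prod_(1 <= i < y | ~~ (p %| i)%N) (y%:Z - i%:Z)
    = \prod_(1 <= i < y | ~~ (p %| i)%N) i%:Z.
  rewrite -(big_nat_coprime_rev _ _ _ Posz _ _ (dvdn_mull n (dvdnn p))).
  rewrite big_nat_cond [RHS]big_nat_cond; apply: eq_bigr => i /andP[/andP[_ i_lt] _].
  by rewrite subzn // ltnW.
rewrite shiftA shift1 prodrN_count count_coprime_index_iota // !Posz_prod.
set P := \prod_(1 <= i < y | _) i%:Z.
by have -> : e * P + A%:Z * (P - e * P) = (e + A%:Z * (1 - e)) * P by ring.
Qed.

Lemma bin_coprime_cong :
  (y%:Z ^+ 2 %| ('C(A * y - 1, y - 1)%:Z - (e + A%:Z * (1 - e)) * 'C(A * n - 1, n - 1)%:Z)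
               * (\prod_(1 <= i < y | ~~ (p %| i)%N) i)%N%:Z)%Z.
Proof.
have := congr1 Posz (bin_mul_coprime_prod A p n p_gt0 n_gt0); rewrite !PoszM => E.
by rewrite mulrBl E -mulrA -mulrCA -mulrBr dvdz_mull // prod_coprime_shift_cong.
Qed.

Lemma signed_binom_coprime_cong :
  (y%:Z ^+ 2 %| (signed_binom A y - e ^+ A.+1 * (e + A%:Z * (1 - e)) * signed_binom A n)
               * (\prod_(1 <= i < y | ~~ (p %| i)%N) i)%N%:Z)%Z.
Proof.
have sign : (-1) ^+ (A.+1 * y) = e ^+ A.+1 * (-1) ^+ (A.+1 * n) :> int.
  by rewrite -exprM -exprD; congr (_ ^+ _); nia.
rewrite /signed_binom sign.
set s := (-1) ^+ (A.+1 * n); set c := e + A%:Z * (1 - e).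
set Cb := 'C(_, _)%:Z; set Cs := 'C(_, _)%:Z; set P := Posz _.
have -> : (e ^+ A.+1 * s * Cb - e ^+ A.+1 * c * (s * Cs)) * P
    = e ^+ A.+1 * s * ((Cb - c * Cs) * P) by ring.
exact/dvdz_mull/bin_coprime_cong.
Qed.

End CoprimeProduct.

Lemma dvdz4_sign (A : nat) : (4 %| (-1) ^+ A.+1 * (A%:Z * 2 - 1) - 1)%Z.
Proof.
rewrite -signr_odd /= -[A in A%:Z](odd_double_half A) -muln2 PoszD PoszM.
by case: (odd A); apply/dvdzP; [exists (A./2)%:Z | exists (- (A./2)%:Z)]; rewrite /=; ring.
Qed.

Lemma signed_binom_pcong A p m k : (0 < A)%N -> prime p -> (0 < m)%N -> (0 < k)%N ->
  (p%:Z ^+ (2 * k) %| signed_binom A (m * p ^ k) - signed_binom A (m * p ^ k.-1))%Z.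
Proof.
move=> A_gt0 p_pr m_gt0 k_gt0; have p_gt0 := prime_gt0 p_pr.
set n := (m * p ^ k.-1)%N; have n_gt0 : (0 < n)%N by rewrite muln_gt0 m_gt0 expn_gt0 p_gt0.
have y_eq : (m * p ^ k = n * p)%N by rewrite -mulnA -expnSr prednK.
have pk_dvd_y : (p%:Z ^+ (2 * k) %| (n * p)%:Z ^+ 2)%Z.
  by rewrite dvdzE !abszX /= -y_eq expnMn mulnC -expnM dvdn_mull.
have cop : coprimez (p%:Z ^+ (2 * k)) (\prod_(1 <= i < n * p | ~~ (p %| i)%N) i)%N%:Z.
  by apply: coprimezXl; rewrite coprimezE coprime_prod_ndvd.
set e : int := (-1) ^+ (n * p - n); set c := e ^+ A.+1 * (e + A%:Z * (1 - e)).
have cong_c : (p%:Z ^+ (2 * k) %| signed_binom A (n * p) - c * signed_binom A n)%Z.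
  rewrite -(Gauss_dvdzl _ cop).
  exact: dvdz_trans pk_dvd_y (signed_binom_coprime_cong A p n A_gt0 p_gt0 n_gt0).
rewrite y_eq; set fy := signed_binom A _; set fn := signed_binom A _.
have -> : fy - fn = (fy - c * fn) + (c - 1) * fn by ring.
rewrite rpredD // dvdz_mulr //.
have [odd_yn | even_yn] := boolP (odd (n * p - n)); last first.
  by rewrite /c /e -signr_odd (negbTE even_yn) expr0 expr1n subrr mulr0 addr0 mul1r subrr.
move: (odd_yn); rewrite odd_mulnBn_prime // => /andP[odd_n /eqP p2].
have k1 : k = 1%N.
  by move: odd_n; rewrite /n p2 oddM oddX orbF; case: (k) k_gt0 => [|[|j]] //= _; rewrite andbF.
rewrite /c /e -signr_odd odd_yn p2 k1 expr1.
have -> : -1 + A%:Z * (1 - -1) = A%:Z * 2 - 1 by ring.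
exact: dvdz4_sign.
Qed.

Lemma moebius_eq0 p n : prime p -> (p ^ 2 %| n)%N -> moebius n = 0.
Proof.
move=> p_pr p2_n; rewrite /moebius; case: (posnP n) => [-> // | n_gt0].
have logn_ge2 : (2 <= logn p n)%N by rewrite -pfactor_dvdn.
suff /negbTE -> : ~~ all (fun q => logn q n == 1%N) (primes n) by rewrite andbF.
apply/allPn; exists p; first by rewrite -logn_gt0 (leq_trans _ logn_ge2).
by apply: contraTneq logn_ge2 => ->.
Qed.

Lemma moebiusMprime p x : prime p -> ~~ (p %| x)%N -> moebius (x * p) = - moebius x.
Proof.
move=> p_pr p_ndvd_x; have p_gt0 := prime_gt0 p_pr.
have x_gt0 : (0 < x)%N by case: x p_ndvd_x; rewrite ?dvdn0.
have primes_xp : perm_eq (primes (x * p)) (p :: primes x).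
  apply: uniq_perm; first exact: primes_uniq.
    by rewrite /= primes_uniq andbT mem_primes p_pr x_gt0 p_ndvd_x.
  by move=> q; rewrite primesM // in_cons orbC primes_prime // inE.
rewrite /moebius (perm_size primes_xp) (perm_all _ primes_xp) /= muln_gt0 x_gt0 p_gt0 /=.
rewrite lognM // (logn_prime _ p_pr) eqxx logn_coprime ?prime_coprime //=.
rewrite (@eq_in_all _ _ (fun q => logn q x == 1%N)); last first.
  move=> q q_x; have /negbTE q_neq_p : q != p.
    by apply: contraTneq q_x => ->; rewrite mem_primes (negbTE p_ndvd_x) !andbF.
  by rewrite lognM // (logn_prime q p_pr) q_neq_p addn0.
by case: all; rewrite ?oppr0 // exprS mulN1r.
Qed.

Section MoebiusSumPrime.

Variables (r p : nat).
Hypotheses (r_gt0 : (0 < r)%N) (p_pr : prime p).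

Local Notation k := (logn p r).

Let divisorsP {d} : d \in divisors r -> (d %| r)%N && (0 < d)%N.
Proof. by rewrite -dvdn_divisors // => d_r; rewrite d_r (dvdn_gt0 r_gt0 d_r). Qed.

Let logn_div_divisors {d} : d \in divisors r -> logn p (r %/ d) = (k - logn p d)%N.
Proof. by case/divisorsP/andP => d_r _; rewrite logn_div. Qed.

Let divisors_div_gt0 {d} : d \in divisors r -> (0 < r %/ d)%N.
Proof. by case/divisorsP/andP => d_r d_gt0; rewrite divn_gt0 // dvdn_leq. Qed.

Let logn_divisors_le {d} : d \in divisors r -> (logn p d <= k)%N.
Proof. by case/divisorsP/andP => d_r _; apply: dvdn_leq_log. Qed.

Let p_dvd_logn_gt0 n : (0 < n)%N -> (0 < logn p n)%N -> (p %| n)%N.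
Proof. by move=> n_gt0; rewrite logn_gt0 mem_primes p_pr n_gt0. Qed.

Lemma moebius_div_logn_lt d :
  d \in divisors r -> (logn p d < k.-1)%N -> moebius (r %/ d) = 0.
Proof.
move=> d_r lt_d; have /andP[dvd_d d_gt0] := divisorsP d_r.
apply: (moebius_eq0 p _ p_pr).
rewrite pfactor_dvdn ?divisors_div_gt0 // logn_div_divisors //.
move: lt_d (logn_divisors_le d_r); lia.
Qed.

Lemma perm_divisors_logn : (0 < k)%N ->
  perm_eq [seq d <- divisors r | logn p d == k]
          [seq (d * p)%N | d <- [seq d <- divisors r | logn p d == k.-1]].
Proof.
move=> k_gt0; apply: uniq_perm.
- by rewrite filter_uniq // divisors_uniq.
- rewrite map_inj_uniq ?filter_uniq ?divisors_uniq //.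
  by move=> a b /eqP; rewrite eqn_pmul2r ?prime_gt0 // => /eqP.
move=> z; rewrite mem_filter; apply/andP/mapP => [[/eqP logn_z z_r] | [d]].
  have /andP[dvd_z z_gt0] := divisorsP z_r.
  have p_z : (p %| z)%N by rewrite p_dvd_logn_gt0 ?logn_z.
  exists (z %/ p)%N; last by rewrite divnK.
  rewrite mem_filter logn_div // logn_z (logn_prime _ p_pr) eqxx subn1 eqxx /=.
  by rewrite -dvdn_divisors // (dvdn_trans (dvdn_div p_z) dvd_z).
rewrite mem_filter => /andP[/eqP logn_d d_r] ->; have /andP[dvd_d d_gt0] := divisorsP d_r.
rewrite lognM // ?prime_gt0 // (logn_prime _ p_pr) eqxx logn_d; split; first by apply/eqP; lia.
rewrite -dvdn_divisors // mulnC -dvdn_divRL // p_dvd_logn_gt0 ?divisors_div_gt0 //.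
by rewrite logn_div_divisors // logn_d; lia.
Qed.

Lemma moebius_div_mulp d : (0 < k)%N -> d \in divisors r -> logn p d = k.-1 ->
  moebius (r %/ d) = - moebius (r %/ (d * p)).
Proof.
move=> k_gt0 d_r logn_d.
have logn_rd : logn p (r %/ d) = 1%N by rewrite logn_div_divisors // logn_d; lia.
have p_rd : (p %| r %/ d)%N by rewrite p_dvd_logn_gt0 ?divisors_div_gt0 ?logn_rd.
have rd_eq : (r %/ d = r %/ (d * p) * p)%N by rewrite divnMA divnK.
have x_gt0 : (0 < r %/ (d * p))%N.
  by rewrite divnMA divn_gt0 ?prime_gt0 // dvdn_leq ?divisors_div_gt0.
rewrite rd_eq moebiusMprime //; apply/negP => p_x; move/eqP: logn_rd.
rewrite rd_eq lognM // ?prime_gt0 // (logn_prime _ p_pr) eqxx addn1 eqSS eqn0Ngt.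
by rewrite logn_gt0 mem_primes p_pr x_gt0 p_x.
Qed.

Lemma sum_divisors_moebius_pair (g : nat -> int) : (0 < k)%N ->
  \sum_(d <- divisors r) moebius (r %/ d) * g d
  = \sum_(d <- divisors r | logn p d == k.-1) moebius (r %/ (d * p)) * (g (d * p)%N - g d).
Proof.
move=> k_gt0; rewrite (bigID (fun d => logn p d == k)) /=.
have -> : \sum_(d <- divisors r | logn p d != k) moebius (r %/ d) * g d
        = \sum_(d <- divisors r | logn p d == k.-1) moebius (r %/ d) * g d.
  rewrite (bigID (fun d => logn p d == k.-1)) /= [X in _ + X]big1_seq ?addr0.
    by apply: eq_bigl => d; case: eqP => [-> | _]; rewrite ?andbF ?andbT //; apply/eqP; lia.
  move=> d /andP[/andP[ne_k ne_pred] d_r]; rewrite moebius_div_logn_lt ?mul0r //.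
  by move: ne_k ne_pred (logn_divisors_le d_r); lia.
rewrite -big_filter (perm_big _ (perm_divisors_logn k_gt0)) big_map big_filter -big_split /=.
rewrite big_seq_cond [RHS]big_seq_cond; apply: eq_bigr => d /andP[d_r /eqP logn_d].
by rewrite (moebius_div_mulp d k_gt0 d_r logn_d) mulNr mulrBr.
Qed.

Lemma moebius_sum_pfactor_dvd (f : nat -> int) (e : nat) :
  (forall m j, (0 < m)%N -> (0 < j)%N ->
     (p%:Z ^+ (e * j) %| f (m * p ^ j)%N - f (m * p ^ j.-1)%N)%Z) ->
  (p%:Z ^+ (e * k) %| \sum_(d <- divisors r) moebius (r %/ d) * f d)%Z.
Proof.
move=> f_cong; have [k0 | k_gt0] := posnP k; first by rewrite k0 muln0 expr0 dvd1z.
rewrite sum_divisors_moebius_pair // big_seq_cond rpred_sum // => d /andP[d_r /eqP logn_d].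
apply: dvdz_mull; have /andP[dvd_d d_gt0] := divisorsP d_r.
have pk_d : (p ^ k.-1 %| d)%N by rewrite pfactor_dvdn // logn_d.
set m := (d %/ p ^ k.-1)%N.
have m_gt0 : (0 < m)%N by rewrite divn_gt0 ?expn_gt0 ?prime_gt0 // dvdn_leq.
have d_eq : d = (m * p ^ k.-1)%N by rewrite divnK.
have dp_eq : (d * p = m * p ^ k)%N by rewrite d_eq -mulnA -expnSr prednK.
by rewrite dp_eq d_eq f_cong.
Qed.

End MoebiusSumPrime.

Lemma moebius_sum_dvd (f : nat -> int) (e r : nat) : (0 < r)%N ->
  (forall p m j, prime p -> (0 < m)%N -> (0 < j)%N ->
     (p%:Z ^+ (e * j) %| f (m * p ^ j)%N - f (m * p ^ j.-1)%N)%Z) ->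
  (r%:Z ^+ e %| \sum_(d <- divisors r) moebius (r %/ d) * f d)%Z.
Proof.
move=> r_gt0 f_cong; rewrite dvdzE abszX; apply/dvdn_partP; first by rewrite expn_gt0 r_gt0.
move=> p; rewrite mem_primes => /and3P[p_pr _ _]; rewrite p_part lognX.
have := moebius_sum_pfactor_dvd r p r_gt0 p_pr f e (fun m j => f_cong p m j p_pr).
by rewrite dvdzE abszX.
Qed.

Lemma signed_binom_ratE (A d : nat) :
  (signed_binom A d)%:~R = (if odd A then 1 else (-1) ^+ d) * ('C(A * d - 1, d - 1))%:R :> rat.
Proof.
rewrite /signed_binom intrM rmorphXn rmorphN1 -pmulrn -(signr_odd _ (A.+1 * d)) oddM /=.
by case: (odd A); rewrite /= ?signr_odd.
Qed.

Lemma moebius_signed_binom_sum_int (A r : nat) : (0 < A)%N -> (0 < r)%N ->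
  (r%:R ^+ 2 : rat)^-1 * \sum_(d <- divisors r) (moebius (r %/ d))%:~R * (signed_binom A d)%:~R
    \is a Num.int.
Proof.
move=> A_gt0 r_gt0.
have := moebius_sum_dvd (signed_binom A) 2 r r_gt0
  (fun p m j => signed_binom_pcong A p m j A_gt0).
case/dvdzP => q sum_eq.
have -> : \sum_(d <- divisors r) (moebius (r %/ d))%:~R * (signed_binom A d)%:~R
    = (\sum_(d <- divisors r) moebius (r %/ d) * signed_binom A d)%:~R :> rat.
  by rewrite rmorph_sum; apply: eq_bigr => d _; rewrite rmorphM.
rewrite sum_eq intrM rmorphXn /= -pmulrn mulrCA mulVf ?mulr1 ?intr_int //.
by rewrite expf_neq0 // pnatr_eq0 -lt0n.
Qed.

Theorem theorem6p1 (p : int) (r : nat) :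
  (p <= -1 \/ 2 <= p) -> (1 <= r)%N ->
  b_minus p r \is a Num.int /\ b_plus p r \is a Num.int.
Proof.
move=> _ r_gt0; rewrite /b_minus /b_plus.
have [p_le | _] := boolP (p <= -1); split.
- rewrite mulNr rpredN; move: (moebius_signed_binom_sum_int 3 r isT r_gt0).
  by under eq_bigr do rewrite signed_binom_ratE /= mul1r.
- move: (moebius_signed_binom_sum_int (2 * `|p| + 1) r (ltn_addl _ (ltn0Sn _)) r_gt0).
  by under eq_bigr do rewrite signed_binom_ratE oddD oddM /= mul1r.
- under eq_bigr do rewrite exprS mulN1r mulrN mulNr -mulrA.
  rewrite sumrN mulNr mulrN opprK; move: (moebius_signed_binom_sum_int 2 r isT r_gt0).
  by under eq_bigr do rewrite signed_binom_ratE /=.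
- move: (moebius_signed_binom_sum_int (2 * `|p| + 2) r (ltn_addl _ (ltn0Sn _)) r_gt0).
  by under eq_bigr do rewrite signed_binom_ratE oddD oddM /= mulrA.
Qed.
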